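(* Let $b,c\in\mathbb{N}$ and $n,m\ge 1$. Consider the generalized OK Corral Pólya–Eggenberger urn with ball transition matrix $\begin{pmatrix}0&-b\\-c&0\end{pmatrix}$ started with $c n$ white and $b m$ black balls, and let $Y_{cn,bm}$ be the number of white balls remaining when the process stops. Then for $1\le k\le n$, \[ \mathbb{P}\{Y_{cn,bm}=ck\}=\frac{k}{(n-k+1)!\,(m-1)!}\frac{b^{n-k}}{c^{n-k}}\sum_{l=1}^{m}(-1)^{m-l}\frac{\binom{m-1}{l-1}}{\binom{n+\frac{b}{c}l}{n-k+1}}\,l^{n+m-1-k} =\frac{k}{(n-k)!\,m!}\frac{c^{m}}{b^{m}}\sum_{l=0}^{n}(-1)^{n-l}\frac{\binom{n-k}{l-k}}{\binom{m+\frac{cl}{b}}{m}}\,l^{m+n-1-k}, \] and \[ \mathbb{P}\{Y_{cn,bm}=0\}=\frac{1}{n!\,(m-1)!}\frac{b^{n}}{c^{n}}\sum_{l=1}^{m}(-1)^{m-l}\frac{\binom{m-1}{l-1}}{\binom{n+\frac{b}{c}l}{n}}\,l^{n+m-1}. \]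
   Context: The urn: at each step one ball is drawn uniformly at random among all balls present and returned; if it is white, $b$ black balls are removed; if it is black, $c$ white balls are removed (so from $cn'$ white and $bm'$ black balls, the number of white balls decreases by $c$ with probability $bm'/(cn'+bm')$ and the number of black balls decreases by $b$ with probability $cn'/(cn'+bm')$). The process stops as soon as the urn contains no white or no black balls; $Y_{cn,bm}$ is the number of white balls at that time ($0$ if whites are exhausted first). For real $x$ and integer $k\ge0$, $\binom{x}{k}=x(x-1)\cdots(x-k+1)/k!$, and $\binom{x}{k}=0$ for negative integers $k$. *)

From mathcomp Require Import all_boot all_order all_algebra.
Set Implicit Arguments. Unset Strict Implicit. Unset Printing Implicit Defensive.
Import Order.TTheory GRing.Theory Num.Theory.
Local Open Scope ring_scope.

Definition binomR (R : fieldType) (x : R) (k : nat) : R :=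
  (\prod_(i < k) (x - i%:R)) / (k`!)%:R.

(* okc_law b c n m k = P{ final number of white balls = c*k } for the OK Corral
   urn started with c*n white and b*m black balls.  From state (c n', b m')
   with n', m' >= 1: whites lose c with prob b m'/(c n' + b m'), blacks lose b
   with prob c n'/(c n' + b m').  Stopping when n' = 0 (Y = 0, i.e. k = 0) or
   m' = 0 (Y = c n', i.e. k = n'). *)
Fixpoint okc_law (R : fieldType) (b c : nat) (n : nat) : nat -> nat -> R :=
  match n with
  | 0 => fun _ k => (k == 0)%:R
  | n'.+1 => fun m k =>
      let fix g (m : nat) : R :=
        match m with
        | 0 => (k == n'.+1)%:R
        | m'.+1 =>
            let tot : R := (c * n'.+1 + b * m'.+1)%:R in
            (b * m'.+1)%:R / tot * @okc_law R b c n' m'.+1 k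
            + (c * n'.+1)%:R / tot * g m'
        end
      in g m
  end.

From mathcomp Require Import all_boot all_order all_algebra.
From mathcomp Require Import ring zify.
Import Order.TTheory GRing.Theory Num.Theory.
Local Open Scope ring_scope.

Set Implicit Arguments. Unset Strict Implicit. Unset Printing Implicit Defensive.

(* After clearing denominators the law P(n, m) of the final white count obeys
     (n + r m) P(n, m) = r m P(n - 1, m) + n P(n, m - 1),      r = b / c,
   a recurrence with positive coefficients, so P is determined by its values
   on two boundary lines.  Each closed form is a superposition
   sum_i A_i w_i phi_i of solutions phi_i(p) = y_i^p / prod_(l <= p) (o + l + y_i)
   of the recurrence in the other colour alone, weighted by
     A_i = (-1)^(N - i) C(N, i) (i + a)^N / N!.
   The relation (N + 1 - i) A^(N+1)_i = -(i + a) A^N_i makes the superposition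
   obey the two-variable recurrence, and on the boundary everything reduces to
   sum_i A_i = 1 and sum_i A_i / (i + a) = 0, both instances of
     sum_i (-1)^(N - i) C(N, i) (i + a)^j = [j = N] N!     (j <= N).
   Summing over black balls gives the formulas with r = b / c, summing over
   white balls the one with c / b. *)

Lemma sum_signed_binomial_pow (R : comNzRingType) (a j N : nat) : (j <= N)%N ->
  \sum_(i < N.+1) (-1 : R) ^+ (N - i) * 'C(N, i)%:R * (i + a)%:R ^+ j
  = (j == N)%:R * N`!%:R.
Proof.
elim: j N => [|j IHj] [|N] hjN.
- by rewrite big_ord1 subnn expr0 bin0 fact0 !mul1r.
- have := exprDn (-1 : R) 1 N.+1; rewrite addNr expr0n /= => binomial_zero.
  rewrite mul0r [RHS]binomial_zero; apply: eq_bigr => i _.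
  by rewrite expr1n !mulr1 mulr_natr.
- by [].
have split_term (i : 'I_N.+2) :
    (-1 : R) ^+ (N.+1 - i) * 'C(N.+1, i)%:R * (i + a)%:R ^+ j.+1
  = (N.+1 + a)%:R * ((-1) ^+ (N.+1 - i) * 'C(N.+1, i)%:R * (i + a)%:R ^+ j)
    - N.+1%:R * ((-1) ^+ (N.+1 - i) * 'C(N, i)%:R * (i + a)%:R ^+ j).
  have /(congr1 (fun x : nat => x%:R : R)) := mul_bin_down N.+1 i.
  rewrite /= !natrM natrB 1?leq_ord // => hC.
  rewrite exprS !natrD.
  have -> : N.+1%:R * ((-1) ^+ (N.+1 - i) * 'C(N, i)%:R * (i%:R + a%:R) ^+ j)
    = (-1) ^+ (N.+1 - i) * (N.+1%:R * 'C(N, i)%:R) * (i%:R + a%:R) ^+ j :> R by ring.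
  by rewrite hC; ring.
rewrite (eq_bigr _ (fun i _ => split_term i)) sumrB -!mulr_sumr IHj 1?ltnW //.
rewrite big_ord_recr /= bin_small // mulr0 mul0r addr0.
have -> : \sum_(i < N.+1) (-1 : R) ^+ (N.+1 - i) * 'C(N, i)%:R * (i + a)%:R ^+ j
    = - \sum_(i < N.+1) (-1) ^+ (N - i) * 'C(N, i)%:R * (i + a)%:R ^+ j.
  rewrite -sumrN; apply: eq_bigr => i _.
  by rewrite subSn 1?leq_ord // exprS mulN1r !mulNr.
rewrite IHj // eqSS (_ : (j == N.+1) = false); last by apply/negbTE; lia.
by rewrite mul0r mulr0 sub0r factS natrM; ring.
Qed.

Section AlternatingCoefficients.
Variable R : numFieldType.

Definition altcoef (a N i : nat) : R :=
  (-1) ^+ (N - i) * 'C(N, i)%:R * (i + a)%:R ^+ N / N`!%:R.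

Lemma fact_natr_neq0 n : n`!%:R != 0 :> R.
Proof. by rewrite pnatr_eq0 -lt0n fact_gt0. Qed.

Lemma altcoef00 a : altcoef a 0 0 = 1.
Proof. by rewrite /altcoef subnn !expr0 bin0 fact0 !mul1r invr1. Qed.

Lemma altcoefS a N i : (i <= N)%N ->
  altcoef a N.+1 i * (N.+1%:R - i%:R) = - (i + a)%:R * altcoef a N i.
Proof.
move=> hi.
have /(congr1 (fun x : nat => x%:R : R)) := mul_bin_down N.+1 i.
rewrite /= !natrM natrB 1?leqW // => hC.
rewrite /altcoef subSn // !exprS factS natrM.
have -> : (-1) * (-1) ^+ (N - i) * 'C(N.+1, i)%:R * ((i + a)%:R * (i + a)%:R ^+ N)
    / (N.+1%:R * N`!%:R) * (N.+1%:R - i%:R)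
  = - ((-1) ^+ (N - i) * ((N.+1%:R - i%:R) * 'C(N.+1, i)%:R)
      * ((i + a)%:R * (i + a)%:R ^+ N) / (N.+1%:R * N`!%:R)) :> R by ring.
rewrite -hC; field.
by rewrite fact_natr_neq0 nat1r pnatr_eq0.
Qed.

Lemma sum_altcoef a N : \sum_(i < N.+1) altcoef a N i = 1.
Proof.
by rewrite -mulr_suml sum_signed_binomial_pow // eqxx mul1r divff ?fact_natr_neq0.
Qed.

Lemma sum_altcoef_div a N : (0 < a)%N ->
  \sum_(i < N.+2) altcoef a N.+1 i / (i + a)%:R = 0.
Proof.
move=> a_gt0.
rewrite (eq_bigr (fun i : 'I_N.+2 =>
  (-1) ^+ (N.+1 - i) * 'C(N.+1, i)%:R * (i + a)%:R ^+ N / N.+1`!%:R)).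
  rewrite -mulr_suml sum_signed_binomial_pow // (_ : (N == N.+1) = false) ?mul0r //.
  by apply/negbTE; lia.
move=> i _; rewrite /altcoef exprS; field.
by rewrite fact_natr_neq0 -natrD pnatr_eq0; lia.
Qed.

End AlternatingCoefficients.

Section Modes.
Variable R : realFieldType.

Definition ffactr (x : R) d := \prod_(j < d) (x - j%:R).

Lemma ffactrS x d : ffactr x d.+1 = x * ffactr (x - 1) d.
Proof.
rewrite /ffactr big_ord_recl subr0; congr (_ * _); apply: eq_bigr => j _.
by rewrite lift0 -natr1; ring.
Qed.

Lemma ffactr_gt0 n y d : 0 <= y -> (d <= n)%N -> 0 < ffactr (n%:R + y) d.
Proof.
move=> y_ge0 dn; apply: prodr_gt0 => j _.
have jn : (j < n)%N by have := ltn_ord j; lia.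
by rewrite subr_gt0 (lt_le_trans (_ : j%:R < n%:R)) ?ltr_nat ?lerDl.
Qed.

Lemma binomR_ffactr x d : binomR x d = ffactr x d / d`!%:R.
Proof. by []. Qed.

Definition mode o y p := y ^+ p / ffactr ((o + p)%:R + y) p.

Lemma mode0 o y : mode o y 0 = 1.
Proof. by rewrite /mode /ffactr big_ord0 expr0 divr1. Qed.

Lemma modeS o y p : 0 <= y ->
  mode o y p.+1 * ((o + p.+1)%:R + y) = y * mode o y p.
Proof.
move=> y_ge0; rewrite /mode ffactrS exprS.
have -> : (o + p.+1)%:R + y - 1 = (o + p)%:R + y by rewrite addnS -natr1; ring.
have F_gt0 : 0 < ffactr ((o + p)%:R + y) p by rewrite ffactr_gt0 // leq_addl.
have x_gt0 : 0 < (o + p.+1)%:R + y by rewrite ltr_wpDr // ltr0n addnS.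
by field; rewrite (lt0r_neq0 F_gt0) nat1r -natrD (lt0r_neq0 x_gt0).
Qed.

End Modes.

(* [m] indexes the colour over which the closed forms sum, [p] the other one. *)
Definition urn_rec (R : numDomainType) (t : R) (a o : nat) (F : nat -> nat -> R) :=
  forall m p, ((o + p.+1)%:R + t * (m + a)%:R) * F m.+1 p.+1
            = t * (m + a)%:R * F m.+1 p + (o + p.+1)%:R * F m p.+1.

Lemma urn_rec_shift (R : numDomainType) (t : R) a o F :
  urn_rec t a o F -> urn_rec t a o.+1 (fun m p => F m p.+1).
Proof. by move=> recF m p; rewrite !addSnnS; apply: recF. Qed.

Lemma superposition_step (R : comNzRingType) (q t e d A1 A0 B1 B0 : R) :
  A1 * d = - e * A0 -> B1 * (q + t * e) = t * e * B0 ->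
  (q + t * (e + d)) * (A1 * B1) = t * (e + d) * (A1 * B0) + q * (A0 * B1).
Proof.
move=> hA hB; apply/eqP; rewrite -subr_eq0; apply/eqP.
transitivity (A1 * (B1 * (q + t * e) - t * e * B0)
  + t * (B1 - B0) * (A1 * d - - e * A0) - A0 * (B1 * (q + t * e) - t * e * B0)).
  by ring.
by rewrite hA hB !subrr; ring.
Qed.

Section Superposition.
Variables (R : realFieldType) (t : R) (a o : nat).
Hypothesis t_ge0 : 0 <= t.

Lemma urn_coef_neq0 m p : (o + p.+1)%:R + t * (m + a)%:R != 0.
Proof. by rewrite lt0r_neq0 // ltr_wpDr ?mulr_ge0 // ltr0n addnS. Qed.

Lemma urn_rec_unique F G : urn_rec t a o F -> urn_rec t a o G ->
  (forall p, F 0 p.+1 = G 0 p.+1) -> (forall m, F m.+1 0 = G m.+1 0) ->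
  forall m p, F m.+1 p = G m.+1 p.
Proof.
move=> recF recG col row m p; elim: p m => [|p IHp] m; first exact: row.
elim: m => [|m IHm].
  by apply: (mulfI (urn_coef_neq0 0 p)); rewrite recF recG IHp col.
by apply: (mulfI (urn_coef_neq0 m.+1 p)); rewrite recF recG IHp IHm.
Qed.

Definition superpose (w : nat -> R) m p :=
  \sum_(i < m) altcoef R a m.-1 i * (w i * mode o (t * (i + a)%:R) p).

Lemma urn_rec_superpose w : urn_rec t a o (superpose w).
Proof.
have mode_rec i p : w i * mode o (t * (i + a)%:R) p.+1 * ((o + p.+1)%:R + t * (i + a)%:R)
    = t * (i + a)%:R * (w i * mode o (t * (i + a)%:R) p).
  by rewrite -mulrA modeS ?mulr_ge0 // mulrCA.
move=> [|m] p; rewrite /superpose /=.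
  rewrite big_ord1 [X in _ = _ * X + _]big_ord1 big_ord0 altcoef00 mulr0 addr0 !mul1r.
  by rewrite -mode_rec mulrC.
rewrite big_ord_recr [X in _ = _ * X + _]big_ord_recr /= !mulrDr [RHS]addrAC.
congr (_ + _); last by rewrite [RHS]mulrCA -mode_rec; ring.
rewrite !mulr_sumr -big_split /=; apply: eq_bigr => i _.
have -> : (m.+1 + a)%:R = (i + a)%:R + (m.+1%:R - i%:R) :> R by rewrite !natrD; ring.
apply: superposition_step; first by rewrite altcoefS // leq_ord.
by rewrite mode_rec.
Qed.

End Superposition.

Section OKCorral.
Variables (R : realFieldType) (b c : nat).
Hypotheses (b_gt0 : (0 < b)%N) (c_gt0 : (0 < c)%N).

Local Notation P := (okc_law R b c).
Local Notation r := (b%:R / c%:R : R).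
Local Notation s := (c%:R / b%:R : R).

Lemma r_ge0 : 0 <= r. Proof. by rewrite divr_ge0 ?ler0n. Qed.
Lemma s_ge0 : 0 <= s. Proof. by rewrite divr_ge0 ?ler0n. Qed.
Lemma b_neq0 : b%:R != 0 :> R. Proof. by rewrite pnatr_eq0 -lt0n. Qed.
Lemma c_neq0 : c%:R != 0 :> R. Proof. by rewrite pnatr_eq0 -lt0n. Qed.

Lemma okc_lawSS n m k : P n.+1 m.+1 k =
  (b * m.+1)%:R / (c * n.+1 + b * m.+1)%:R * P n m.+1 k
  + (c * n.+1)%:R / (c * n.+1 + b * m.+1)%:R * P n.+1 m k.
Proof. by []. Qed.

Lemma okc_law_rec_white o k : urn_rec r 1 o (fun m p => P (o + p) m k).
Proof.
move=> m p /=; rewrite addnS okc_lawSS.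
field; rewrite -natrD !nat1r -!natrM -natrD !pnatr_eq0; lia.
Qed.

Lemma okc_law_rec_black j k : urn_rec s j.+1 0 (fun m p => P (j + m) p k).
Proof.
move=> m p /=; rewrite !addnS okc_lawSS.
field; rewrite -natrD !nat1r -!natrM -natrD !pnatr_eq0; lia.
Qed.

Lemma okc_law_no_black n k : P n 0 k = (k == n)%:R.
Proof. by case: n. Qed.

Lemma okc_law_gt n m k : (n < k)%N -> P n m k = 0.
Proof.
elim: n m => [|n IHn] m nk.
  by rewrite /= (_ : (k == 0) = false) //; lia.
elim: m => [|m IHm]; first by rewrite okc_law_no_black (_ : (k == n.+1) = false) //; lia.
by rewrite okc_lawSS IHm IHn 1?ltnW // !mulr0 addr0.
Qed.

Lemma okc_law_zero_superpose n M :
  P n M.+1 0 = superpose r 1 0 (fun=> 1) M.+1 n.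
Proof.
apply: (urn_rec_unique r_ge0 (okc_law_rec_white 0 0) (urn_rec_superpose 1 0 r_ge0 _)).
  by move=> p; rewrite /superpose big_ord0 okc_law_no_black.
move=> m; rewrite /superpose /= -[LHS](sum_altcoef R 1 m); apply: eq_bigr => i _.
by rewrite mode0 !mulr1.
Qed.

Lemma okc_law_zero n m : (1 <= m)%N ->
  P n m 0 =
    1 / (n`! * (m - 1)`!)%:R * r ^+ n *
    \sum_(1 <= l < m.+1)
       (-1) ^+ (m - l) * 'C(m - 1, l - 1)%:R
       / binomR (n%:R + r * l%:R) n
       * l%:R ^+ (n + m - 1).
Proof.
case: m => [//|M] _; rewrite okc_law_zero_superpose /superpose /=.
rewrite big_add1 /= big_mkord mulr_sumr; apply: eq_bigr => i _.
rewrite /altcoef /mode binomR_ffactr add0n addn1 !subn1 addnS /= subSS exprD exprMn mul1r.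
have F_gt0 : 0 < ffactr (n%:R + r * i.+1%:R) n by rewrite ffactr_gt0 // mulr_ge0 ?r_ge0.
by field; rewrite !fact_natr_neq0 lt0r_neq0.
Qed.

(* The row n = k escapes [urn_rec_unique]: there the neighbour P(k, 0) = 1 is
   absorbing, and the superposition instead picks up the same contribution
   from its value k / r one row below. *)
Lemma okc_law_diag_superpose j M :
  P (j + 1) M.+1 j.+1 = superpose r 1 j (fun i => j.+1%:R / (r * (i + 1)%:R)) M.+1 1.
Proof.
set w := fun i => _.
have recF := okc_law_rec_white j j.+1; have recG := urn_rec_superpose 1 j r_ge0 w.
have G_row0 : superpose r 1 j w 1 0 = j.+1%:R / r.
  rewrite /superpose big_ord1 altcoef00 mode0 /w /=.
  by field; rewrite b_neq0 c_neq0.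
have G_row m : superpose r 1 j w m.+2 0 = 0.
  rewrite /superpose /= -[RHS](mulr0 (j.+1%:R / r)) -[in RHS](@sum_altcoef_div R 1 m isT).
  rewrite mulr_sumr; apply: eq_bigr => i _; rewrite mode0 /w.
  by field; rewrite b_neq0 c_neq0 natr1 pnatr_eq0.
elim: M => [|M IHM]; [apply: (mulfI (urn_coef_neq0 1 j r_ge0 0 0))
  | apply: (mulfI (urn_coef_neq0 1 j r_ge0 M.+1 0))]; rewrite recF recG /=.
  rewrite okc_law_gt ?addn0 // okc_law_no_black !addn1 eqxx /= G_row0 /superpose big_ord0.
  by field; rewrite b_neq0 c_neq0.
by rewrite okc_law_gt ?addn0 // G_row IHM.
Qed.

Lemma okc_law_first_superpose j d M :
  P (j + d.+1) M.+1 j.+1 = superpose r 1 j (fun i => j.+1%:R / (r * (i + 1)%:R)) M.+1 d.+1.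
Proof.
apply: (urn_rec_unique r_ge0 (urn_rec_shift (okc_law_rec_white j j.+1))
  (urn_rec_shift (urn_rec_superpose 1 j r_ge0 _))) => [p | m].
  by rewrite /superpose big_ord0 okc_law_no_black (_ : (j.+1 == j + p.+2) = false) //; lia.
exact: okc_law_diag_superpose.
Qed.

Lemma okc_law_first n m k : (1 <= k <= n)%N -> (1 <= m)%N ->
  P n m k =
    k%:R / ((n - k).+1`! * (m - 1)`!)%:R * r ^+ (n - k) *
    \sum_(1 <= l < m.+1)
       (-1) ^+ (m - l) * 'C(m - 1, l - 1)%:R
       / binomR (n%:R + r * l%:R) (n - k).+1
       * l%:R ^+ (n + m - 1 - k).
Proof.
case: k => [//|j] /andP[_ jn]; case: m => [//|M] _.
have [d ->] : exists d, n = (j + d.+1)%N by exists (n - j.+1)%N; lia.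
rewrite okc_law_first_superpose /superpose big_add1 /= big_mkord mulr_sumr.
apply: eq_bigr => i _.
have -> : (j + d.+1 - j.+1 = d)%N by lia.
have -> : (j + d.+1 + M.+1 - 1 - j.+1 = d + M)%N by lia.
rewrite /altcoef /mode binomR_ffactr addn1 !subn1 /= subSS exprS exprD !exprMn.
have F_gt0 : 0 < ffactr ((j + d.+1)%:R + r * i.+1%:R) d.+1.
  by rewrite ffactr_gt0 ?leq_addl // mulr_ge0 ?r_ge0.
by field; rewrite !fact_natr_neq0 lt0r_neq0 // b_neq0 c_neq0 nat1r pnatr_eq0.
Qed.

Lemma okc_law_second_superpose j N p :
  P (j + N.+1) p j.+1 = superpose s j.+1 0 (fun i => j.+1%:R / (i + j.+1)%:R) N.+1 p.
Proof.
apply: (urn_rec_unique s_ge0 (okc_law_rec_black j j.+1)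
  (urn_rec_superpose j.+1 0 s_ge0 _)) => [p' | [|m]].
- by rewrite /superpose big_ord0 okc_law_gt ?addn0.
- rewrite okc_law_no_black /superpose big_ord1 altcoef00 mode0 addn1 eqxx /=.
  by field; rewrite nat1r pnatr_eq0.
rewrite okc_law_no_black (_ : (j.+1 == j + m.+2) = false); last by apply/negbTE; lia.
rewrite /superpose /= -[LHS](mulr0 j.+1%:R) -[in LHS](@sum_altcoef_div R j.+1 m isT).
rewrite mulr_sumr; apply: eq_bigr => i _; rewrite mode0.
by field; rewrite nat1r -natrD pnatr_eq0 addnS.
Qed.

Lemma okc_law_second n m k : (1 <= k <= n)%N -> (1 <= m)%N ->
  P n m k =
    k%:R / ((n - k)`! * m`!)%:R * s ^+ m *
    \sum_(0 <= l < n.+1)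
       (-1) ^+ (n - l) * (if (k <= l)%N then 'C(n - k, l - k) else 0%N)%:R
       / binomR (m%:R + c%:R * l%:R / b%:R) m
       * l%:R ^+ (m + n - 1 - k).
Proof.
case: k => [//|j] /andP[_ jn]; case: m => [//|M] _.
have [N ->] : exists N, n = (j + N.+1)%N by exists (n - j.+1)%N; lia.
rewrite okc_law_second_superpose /superpose /= (@big_cat_nat _ _ _ j.+1) //=; last by lia.
rewrite big_nat_cond [X in X + _]big1 ?add0r; last first.
  by move=> l /andP[/andP[_ lj] _]; rewrite leqNgt lj mulr0 !mul0r.
rewrite (big_addn 0 _ j.+1) (_ : ((j + N.+1).+1 - j.+1 = N.+1)%N); last by lia.
rewrite big_mkord mulr_sumr; apply: eq_bigr => i _.
rewrite leq_addl addnK.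
have -> : (j + N.+1 - j.+1 = N)%N by lia.
have -> : (j + N.+1 - (i + j.+1) = N - i)%N by lia.
have -> : (M.+1 + (j + N.+1) - 1 - j.+1 = N + M)%N by lia.
have -> : c%:R * (i + j.+1)%:R / b%:R = s * (i + j.+1)%:R by rewrite mulrAC.
rewrite /altcoef /mode binomR_ffactr add0n exprD exprMn [(i + j.+1)%:R ^+ M.+1]exprS.
have F_gt0 : 0 < ffactr (M.+1%:R + s * (i + j.+1)%:R) M.+1.
  by rewrite ffactr_gt0 // mulr_ge0 ?s_ge0.
by field; rewrite !fact_natr_neq0 lt0r_neq0 // nat1r -natrD pnatr_eq0 addnS.
Qed.

End OKCorral.
Theorem corollary2 (R : realFieldType) (b c n m : nat) :
  (0 < b)%N -> (0 < c)%N -> (1 <= n)%N -> (1 <= m)%N ->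
  (forall k : nat, (1 <= k <= n)%N ->
     okc_law R b c n m k =
       k%:R / ((n - k).+1`! * (m - 1)`!)%:R * (b%:R / c%:R) ^+ (n - k) *
       \sum_(1 <= l < m.+1)
          (-1) ^+ (m - l) * 'C(m - 1, l - 1)%:R
          / binomR (n%:R + b%:R / c%:R * l%:R) (n - k).+1
          * l%:R ^+ (n + m - 1 - k)
     /\
     okc_law R b c n m k =
       k%:R / ((n - k)`! * m`!)%:R * (c%:R / b%:R) ^+ m *
       \sum_(0 <= l < n.+1)
          (-1) ^+ (n - l) * (if (k <= l)%N then 'C(n - k, l - k) else 0%N)%:R
          / binomR (m%:R + c%:R * l%:R / b%:R) m
          * l%:R ^+ (m + n - 1 - k))
  /\
  okc_law R b c n m 0 =
    1 / (n`! * (m - 1)`!)%:R * (b%:R / c%:R) ^+ n *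
    \sum_(1 <= l < m.+1)
       (-1) ^+ (m - l) * 'C(m - 1, l - 1)%:R
       / binomR (n%:R + b%:R / c%:R * l%:R) n
       * l%:R ^+ (n + m - 1).
Proof.
move=> b_gt0 c_gt0 _ m_ge1; split; last exact: okc_law_zero.
by move=> k kn; split; [exact: okc_law_first | exact: okc_law_second].
Qed.
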